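(* Let $m\ge1$, $0\le r\le m$, $\delta\in(0,\tfrac12)$, and let $W$ be the random coefficient vector described in the context. Let $A\in GL_m(\mathbb{F}_2)$, $b\in\mathbb{F}_2^m$, and let $\pi=\pi_{A,b,r}:\mathbb{F}_2^{\binom{m}{r}}\to\mathbb{F}_2^{\binom{m}{r}}$ be the map sending the coefficient vector $(u_I)_{|I|=r}$ of $P(x)=\sum_{|I|=r}u_Ix_I$ to the vector of coefficients of the degree-$r$ monomials $x_J$ ($|J|=r$) in the multilinear reduction of $P(Ax+b)$. Then for every linear subspace $\mathcal{G}\subseteq\mathbb{F}_2^{\binom{m}{r}}$, \[d(U_{\mathcal{G}};\,W_r|W_{>r})=d(U_{\pi(\mathcal{G})};\,W_r|W_{>r}),\] where $\pi(\mathcal{G})=\{\pi(g):g\in\mathcal{G}\}$ and $U_{\mathcal{H}}$ denotes a uniform random variable on $\mathcal{H}$.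
   Context: Let $n=2^m$. Every function $\mathbb{F}_2^m\to\mathbb{F}_2$ is uniquely a multilinear polynomial $\sum_{S\subseteq[m]}c_Sx_S$ with $x_S=\prod_{i\in S}x_i$; ''multilinear reduction'' means using $x_i^2=x_i$. Let $Z=(Z_x)_{x\in\mathbb{F}_2^m}$ have i.i.d. Bernoulli$(\delta)$ entries, and let $W=(W_S)_{S\subseteq[m]}$ be the coefficient vector of the multilinear polynomial whose evaluation table on $\mathbb{F}_2^m$ is $Z$ (equivalently $W_S=\sum_{x:\,\{i:x_i=1\}\subseteq S}Z_x$). Set $W_r=(W_S)_{|S|=r}$ and $W_{>r}=(W_S)_{|S|>r}$. Entropies are base 2, $H(V|C)=H(V,C)-H(C)$. For a subspace $\mathcal{H}$, $d(U_{\mathcal{H}};W_r|W_{>r}):=H(U+W'_r\mid W'_{>r})-\tfrac12\big(H(U)+H(W_r|W_{>r})\big)$, where $(W'_r,W'_{>r})\sim(W_r,W_{>r})$ and $U\sim U_{\mathcal{H}}$ is independent of it. *)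

From HB Require Import structures.
From mathcomp Require Import all_boot all_order all_algebra.
From mathcomp Require Import reals exp.
Set Implicit Arguments. Unset Strict Implicit. Unset Printing Implicit Defensive.
Import Order.TTheory GRing.Theory Num.Theory.
Local Open Scope ring_scope.

Definition supp_in m (x : 'cV['F_2]_m) (S : {set 'I_m}) : bool :=
  [forall i, (x i ord0 != 0) ==> (i \in S)].

(* coefficient c_S of the (unique) multilinear polynomial with evaluation table f:
   c_S = sum_{x : supp x ⊆ S} f x  (Möbius inversion, as in the context) *)
Definition anf m (f : 'cV['F_2]_m -> 'F_2) (S : {set 'I_m}) : 'F_2 :=
  \sum_(x : 'cV['F_2]_m | supp_in x S) f x.

Definition monom m (S : {set 'I_m}) (x : 'cV['F_2]_m) : 'F_2 :=
  \prod_(i in S) x i ord0.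

Notation rset m r := {S : {set 'I_m} | #|S| == r}.
Notation gtset m r := {S : {set 'I_m} | (r < #|S|)%N}.
Notation rvec m r := {ffun rset m r -> 'F_2}.

Definition poly_eval m r (u : rvec m r) (y : 'cV['F_2]_m) : 'F_2 :=
  \sum_(I : rset m r) u I * monom (val I) y.

Definition pi_map m r (A : 'M['F_2]_m) (b : 'cV['F_2]_m) (u : rvec m r) : rvec m r :=
  [ffun J : rset m r => anf (fun x => poly_eval u (A *m x + b)) (val J)].

Definition is_subspace m r (G : {set rvec m r}) : Prop :=
  [/\ 0 \in G,
      (forall u v, u \in G -> v \in G -> u + v \in G) &
      (forall (a : 'F_2) u, u \in G -> [ffun i => a * u i] \in G)].

Section Prob.
Variable R : realType.

Definition log2 (x : R) : R := ln x / ln 2.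

(* Shannon entropy (base 2) of the random variable f under the weights p on T
   (with the convention 0 log 0 = 0, automatic since 0 * _ = 0). *)
Definition entropy (T V : finType) (p : T -> R) (f : T -> V) : R :=
  - \sum_(v : V) ((\sum_(t | f t == v) p t) * log2 (\sum_(t | f t == v) p t)).

Definition pZ m (delta : R) (z : {ffun 'cV['F_2]_m -> 'F_2}) : R :=
  \prod_(x : 'cV['F_2]_m) (if z x == 1 then delta else 1 - delta).

Definition Wr m r (z : {ffun 'cV['F_2]_m -> 'F_2}) : rvec m r :=
  [ffun J : rset m r => anf z (val J)].

Definition Wgt m r (z : {ffun 'cV['F_2]_m -> 'F_2}) : {ffun gtset m r -> 'F_2} :=
  [ffun S : gtset m r => anf z (val S)].

Definition unif (T : finType) (H : {set T}) (u : T) : R :=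
  if u \in H then (#|H|%:R)^-1 else 0.

(* d(U_H ; W_r | W_{>r}) with U independent of (W'_r, W'_{>r}) *)
Definition dist_d m r (delta : R) (H : {set rvec m r}) : R :=
  let pj := fun w : rvec m r * {ffun 'cV['F_2]_m -> 'F_2} => unif H w.1 * pZ delta w.2 in
  (entropy pj (fun w => (w.1 + Wr r w.2, Wgt r w.2)) - entropy pj (fun w => Wgt r w.2))
  - 2^-1 * (entropy (unif H) id
            + (entropy (pZ delta) (fun z : {ffun 'cV['F_2]_m -> 'F_2} => (Wr r z, Wgt r z))
               - entropy (pZ delta) (fun z : {ffun 'cV['F_2]_m -> 'F_2} => Wgt r z))).

End Prob.

From HB Require Import structures.
From mathcomp Require Import all_boot all_order all_algebra.
From mathcomp Require Import reals exp.
Import Order.TTheory GRing.Theory Num.Theory.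
Local Open Scope ring_scope.

(* The affine substitution T x = A x + b permutes F_2^m, so z |-> z o T
   preserves the law of Z, and it preserves the space of functions of degree
   at most r.  On that space it acts on the top-degree coefficients by pi,
   because the part of degree < r stays of degree < r.  Hence
   (u, z) |-> (pi u, z o T) is a weight-preserving bijection from the sample
   space of (U_G, Z) onto that of (U_pi(G), Z) which matches the level sets of
   W_{>r}, of (U + W_r, W_{>r}) and of U; entropies only depend on these level
   sets and their weights. *)

Set Implicit Arguments. Unset Strict Implicit. Unset Printing Implicit Defensive.

Lemma F2_natr_neq0 (a : 'F_2) : a = (a != 0)%:R.
Proof. by case: a => [[|[|n]] //= lt_n2]; apply: val_inj. Qed.

Lemma card_set_interval (T : finType) (A B : {set T}) : A \subset B ->
  #|[set S : {set T} | A \subset S & S \subset B]| = (2 ^ #|B :\: A|)%N.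
Proof.
move=> sAB; rewrite -card_powerset.
have -> : [set S : {set T} | A \subset S & S \subset B] =
          [set A :|: Y | Y in powerset (B :\: A)].
  apply/setP => S; rewrite inE; apply/andP/imsetP => [[sAS sSB]|[Y]].
    exists (S :\: A); first by rewrite inE setSD.
    by rewrite setDE setUIr setUCr setIT; apply/esym/setUidPr.
  by rewrite inE => sYBA ->; rewrite subsetUl subUset sAB (subset_trans sYBA) ?subsetDl.
apply: card_in_imset => Y1 Y2; rewrite !inE => sY1 sY2 eqAY.
have disjA (Y : {set T}) : Y \subset B :\: A -> Y = (A :|: Y) :\: A.
  by rewrite subsetD setDUl setDv set0U => /andP[_ /setDidPl ->].
by rewrite (disjA _ sY1) (disjA _ sY2) eqAY.
Qed.

Lemma sum_set_interval_F2 (T : finType) (A B : {set T}) :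
  \sum_(S : {set T}) ((A \subset S) && (S \subset B))%:R = (A == B)%:R :> 'F_2.
Proof.
rewrite -natr_sum -big_mkcond /= sum1_card.
have [sAB|nsAB] := boolP (A \subset B); last first.
  case: eqP => [eqAB|_]; first by rewrite eqAB subxx in nsAB.
  rewrite eq_card0 // => S; apply/andP => -[sAS sSB].
  by rewrite (subset_trans sAS sSB) in nsAB.
have two0 : 2%:R = 0 :> 'F_2 by apply: val_inj.
rewrite -(eq_card (A := [set S : {set T} | A \subset S & S \subset B])); last first.
  by move=> S; rewrite inE.
rewrite card_set_interval // natrX two0 expr0n cards_eq0 setD_eq0.
by rewrite eqEsubset sAB.
Qed.

Section BooleanCube.
Variable m : nat.
Local Notation V := 'cV['F_2]_m.

Definition supp (x : V) : {set 'I_m} := [set i | x i ord0 != 0].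

Definition vec_of_set (Y : {set 'I_m}) : V := \col_i (i \in Y)%:R.

Lemma entry_supp (x : V) i : x i ord0 = (i \in supp x)%:R.
Proof. by rewrite inE -F2_natr_neq0. Qed.

Lemma vec_of_setK : cancel vec_of_set supp.
Proof. by move=> Y; apply/setP => i; rewrite inE mxE; case: (i \in Y). Qed.

Lemma suppK : cancel supp vec_of_set.
Proof. by move=> x; apply/matrixP => i j; rewrite mxE (ord1 j) entry_supp. Qed.

Lemma supp_inE (x : V) S : supp_in x S = (supp x \subset S).
Proof.
apply/forallP/subsetP => [sxS i|sxS i]; first by rewrite inE => /(implyP (sxS i)).
by apply/implyP => xi; apply: sxS; rewrite inE.
Qed.

Lemma monomE S (x : V) : monom S x = (S \subset supp x)%:R.
Proof.
rewrite /monom; have [/subsetP sSx|] := boolP (S \subset supp x).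
  by rewrite big1 // => i /sSx; rewrite entry_supp => ->.
case/subsetPn => i Si; rewrite (bigD1 i) //= entry_supp => /negbTE ->.
by rewrite mul0r.
Qed.

Lemma monomU1 j S (x : V) : monom (j |: S) x = x j ord0 * monom S x.
Proof. by rewrite !monomE subUset sub1set entry_supp -natrM mulnb. Qed.

Lemma anfE (f : V -> 'F_2) S :
  anf f S = \sum_(Y : {set 'I_m}) (Y \subset S)%:R * f (vec_of_set Y).
Proof.
rewrite /anf (reindex vec_of_set) /=; last first.
  by exists supp => [Y _|x _]; rewrite ?vec_of_setK ?suppK.
rewrite big_mkcond; apply: eq_bigr => Y _.
by rewrite supp_inE vec_of_setK; case: (Y \subset S); rewrite ?mul1r ?mul0r.
Qed.

Lemma anf_monom_sum (I : finType) (c : I -> 'F_2) (g : I -> {set 'I_m}) S :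
  anf (fun x => \sum_i c i * monom (g i) x) S = \sum_(i | g i == S) c i.
Proof.
rewrite anfE [RHS]big_mkcond /=.
under eq_bigr => Y _ do rewrite mulr_sumr.
rewrite exchange_big; apply: eq_bigr => i _.
rewrite -mulrb -mulr_natr -sum_set_interval_F2 mulr_sumr.
apply: eq_bigr => Y _.
by rewrite mulrCA monomE vec_of_setK -natrM mulnb andbC.
Qed.

Lemma sum_monom_superset (Y : {set 'I_m}) (x : V) :
  \sum_(S : {set 'I_m}) (Y \subset S)%:R * monom S x = (Y == supp x)%:R.
Proof.
rewrite -sum_set_interval_F2; apply: eq_bigr => S _.
by rewrite monomE -natrM mulnb.
Qed.

Lemma anf_expand (f : V -> 'F_2) x : f x = \sum_S anf f S * monom S x.
Proof.
have -> : \sum_S anf f S * monom S x = \sum_Y f (vec_of_set Y) * (Y == supp x)%:R.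
  under eq_bigr do rewrite anfE mulr_suml.
  rewrite exchange_big; apply: eq_bigr => Y _.
  rewrite -sum_monom_superset mulr_sumr; apply: eq_bigr => S _.
  by rewrite mulrAC mulrC.
rewrite (bigD1 (supp x)) //= eqxx mulr1 suppK big1 ?addr0 // => Y /negbTE ->.
by rewrite mulr0.
Qed.

Lemma eq_anf (f g : V -> 'F_2) : f =1 g -> anf f =1 anf g.
Proof. by move=> eq_fg S; apply: eq_bigr => x _. Qed.

Lemma anfD (f g : V -> 'F_2) S : anf (fun x => f x + g x) S = anf f S + anf g S.
Proof. exact: big_split. Qed.

Lemma anfB (f g : V -> 'F_2) S : anf (fun x => f x - g x) S = anf f S - anf g S.
Proof. exact: sumrB. Qed.

Lemma anfZ a (f : V -> 'F_2) S : anf (fun x => a * f x) S = a * anf f S.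
Proof. by rewrite /anf mulr_sumr. Qed.

Lemma anf_sum (I : finType) (g : I -> V -> 'F_2) S :
  anf (fun x => \sum_i g i x) S = \sum_i anf (g i) S.
Proof. exact: exchange_big. Qed.

Definition deg_lt k (f : V -> 'F_2) :=
  forall S : {set 'I_m}, (k <= #|S|)%N -> anf f S = 0.

Lemma eq_deg_lt k (f g : V -> 'F_2) : f =1 g -> deg_lt k f -> deg_lt k g.
Proof. by move=> eq_fg df S kS; rewrite -(eq_anf eq_fg) df. Qed.

Lemma deg_ltW k k' f : (k <= k')%N -> deg_lt k f -> deg_lt k' f.
Proof. by move=> le_kk' df S kS; rewrite df // (leq_trans le_kk'). Qed.

Lemma deg_ltD k f g : deg_lt k f -> deg_lt k g -> deg_lt k (fun x => f x + g x).
Proof. by move=> df dg S kS; rewrite anfD df ?dg ?addr0. Qed.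

Lemma deg_ltZ k a f : deg_lt k f -> deg_lt k (fun x => a * f x).
Proof. by move=> df S kS; rewrite anfZ df ?mulr0. Qed.

Lemma deg_lt_sum k (I : finType) (g : I -> V -> 'F_2) :
  (forall i, deg_lt k (g i)) -> deg_lt k (fun x => \sum_i g i x).
Proof. by move=> dg S kS; rewrite anf_sum big1 // => i _; apply: dg. Qed.

Lemma deg_lt0 k : deg_lt k (fun _ => 0).
Proof. by move=> S _; rewrite /anf big1. Qed.

Lemma deg_lt_monom_sum k (I : finType) (c : I -> 'F_2) (g : I -> {set 'I_m}) :
  (forall i, (k <= #|g i|)%N -> c i = 0) ->
  deg_lt k (fun x => \sum_i c i * monom (g i) x).
Proof.
by move=> c0 S kS; rewrite anf_monom_sum big1 // => i /eqP giS; rewrite c0 ?giS.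
Qed.

Lemma deg_lt_cst a : deg_lt 1 (fun _ => a).
Proof.
apply: (@eq_deg_lt _ (fun x => \sum_(i < 1) a * monom set0 x)).
  by move=> x; rewrite big_ord1 /monom big_set0 mulr1.
by apply: deg_lt_monom_sum => i; rewrite cards0.
Qed.

Lemma deg_lt_mul_coord k j f : deg_lt k f -> deg_lt k.+1 (fun x => x j ord0 * f x).
Proof.
move=> df; apply: (@eq_deg_lt _ (fun x => \sum_S anf f S * monom (j |: S) x)).
  move=> x; rewrite [f x]anf_expand mulr_sumr.
  by apply: eq_bigr => S _; rewrite monomU1 mulrCA.
apply: deg_lt_monom_sum => S; rewrite cardsU1 => le_kS; apply: df.
by case: (j \notin S) le_kS; rewrite ?add1n ?add0n // => /ltnW.
Qed.

Lemma deg_lt_mul_affine k (a : 'I_m -> 'F_2) c f : deg_lt k f ->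
  deg_lt k.+1 (fun x => (\sum_j a j * x j ord0 + c) * f x).
Proof.
move=> df; apply: (@eq_deg_lt _ (fun x => \sum_j a j * (x j ord0 * f x) + c * f x)).
  move=> x; rewrite mulrDl mulr_suml; congr (_ + _).
  by apply: eq_bigr => j _; rewrite mulrA.
apply: deg_ltD; last by apply/deg_ltZ/(deg_ltW _ df).
by apply: deg_lt_sum => j; apply/deg_ltZ/deg_lt_mul_coord.
Qed.

Lemma deg_lt_prod_affine (I : eqType) (s : seq I) (a : I -> 'I_m -> 'F_2)
    (c : I -> 'F_2) :
  deg_lt (size s).+1 (fun x => \prod_(i <- s) (\sum_j a i j * x j ord0 + c i)).
Proof.
elim: s => [|i s IHs] /=.
  by apply: (@eq_deg_lt _ (fun _ => 1)); [move=> x; rewrite big_nil | exact: deg_lt_cst].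
apply: (@eq_deg_lt _ (fun x => (\sum_j a i j * x j ord0 + c i) *
                                \prod_(i' <- s) (\sum_j a i' j * x j ord0 + c i'))).
  by move=> x; rewrite big_cons.
exact: deg_lt_mul_affine.
Qed.

Lemma deg_lt_comp_affine k (A : 'M['F_2]_m) (b : V) f :
  deg_lt k f -> deg_lt k (fun x => f (A *m x + b)).
Proof.
move=> df; apply: (@eq_deg_lt _ (fun x => \sum_S anf f S *
    \prod_(i <- enum S) (\sum_j A i j * x j ord0 + b i ord0))).
  move=> x; rewrite [in RHS]anf_expand; apply: eq_bigr => S _.
  by rewrite /monom big_enum; congr (_ * _); apply: eq_bigr => i _; rewrite !mxE.
apply: deg_lt_sum => S; have [kS|ltSk] := leqP k #|S|.
  by apply: (@eq_deg_lt _ (fun _ => 0)) => [x|]; rewrite ?df ?mul0r //; exact: deg_lt0.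
apply/deg_ltZ/(deg_ltW ltSk); rewrite cardE.
exact: deg_lt_prod_affine.
Qed.

End BooleanCube.

Section HomogeneousPart.
Variables m r : nat.
Local Notation V := 'cV['F_2]_m.

Definition homog_coefs (f : V -> 'F_2) : rvec m r := [ffun J => anf f (val J)].

Lemma homog_coefsB f g :
  homog_coefs (fun x => f x - g x) = homog_coefs f - homog_coefs g.
Proof. by apply/ffunP => J; rewrite !ffunE anfB. Qed.

Lemma homog_coefs_deg_lt f : deg_lt r f -> homog_coefs f = 0.
Proof. by move=> df; apply/ffunP => J; rewrite !ffunE df // (eqP (valP J)). Qed.

Lemma deg_lt_homog_coefs_eq0 f :
  deg_lt r.+1 f -> homog_coefs f = 0 -> deg_lt r f.
Proof.
move=> df /ffunP homog0 S; rewrite leq_eqVlt => /predU1P [rS|]; last exact: df.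
by have := homog0 (exist _ S (introT eqP (esym rS))); rewrite !ffunE.
Qed.

Lemma poly_evalB (u v : rvec m r) x :
  poly_eval (u - v) x = poly_eval u x - poly_eval v x.
Proof. by rewrite /poly_eval -sumrB; apply: eq_bigr => I _; rewrite !ffunE mulrBl. Qed.

Lemma anf_poly_eval (u : rvec m r) S :
  anf (poly_eval u) S = \sum_(I : rset m r | val I == S) u I.
Proof. exact: anf_monom_sum. Qed.

Lemma homog_coefs_poly_eval u : homog_coefs (poly_eval u) = u.
Proof.
by apply/ffunP => J; rewrite ffunE anf_poly_eval (big_pred1 J) // => I; rewrite /= val_eqE.
Qed.

Lemma deg_lt_poly_eval (u : rvec m r) : deg_lt r.+1 (poly_eval u).
Proof. by apply: deg_lt_monom_sum => I; rewrite (eqP (valP I)) ltnn. Qed.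

Lemma deg_lt_sub_homog f :
  deg_lt r.+1 f -> deg_lt r (fun x => f x - poly_eval (homog_coefs f) x).
Proof.
move=> df; apply: deg_lt_homog_coefs_eq0.
  by move=> S rS; rewrite anfB df // deg_lt_poly_eval // subrr.
by rewrite homog_coefsB homog_coefs_poly_eval subrr.
Qed.

End HomogeneousPart.

Section AffineChange.
Variables (m r : nat) (A : 'M['F_2]_m) (b : 'cV['F_2]_m).
Hypothesis unitA : A \in unitmx.
Local Notation V := 'cV['F_2]_m.
Local Notation pi := (@pi_map m r A b).

Lemma affineK (x : V) : A *m (invmx A *m x - invmx A *m b) + b = x.
Proof. by rewrite mulmxBr !mulmxA mulmxV // !mul1mx subrK. Qed.

Lemma affine_inj : injective (fun x : V => A *m x + b).
Proof. by move=> x y /(congr1 (fun z => invmx A *m (z - b))); rewrite !addrK !mulKmx. Qed.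

Lemma deg_lt_comp_affineP k (f : V -> 'F_2) :
  deg_lt k (fun x => f (A *m x + b)) <-> deg_lt k f.
Proof.
split=> [dfT|]; last exact: deg_lt_comp_affine.
apply: eq_deg_lt (deg_lt_comp_affine (invmx A) (- (invmx A *m b)) dfT) => x.
by rewrite affineK.
Qed.

Lemma pi_mapB u v : pi (u - v) = pi u - pi v.
Proof.
by apply/ffunP => J; rewrite !ffunE -anfB; apply: eq_anf => x; rewrite poly_evalB.
Qed.

Lemma pi_map_inj : injective pi.
Proof.
move=> u v eq_uv; apply/eqP; rewrite -subr_eq0; apply/eqP.
have dT : deg_lt r (fun x => poly_eval (u - v) (A *m x + b)).
  apply: deg_lt_homog_coefs_eq0; first exact/deg_lt_comp_affine/deg_lt_poly_eval.
  by rewrite -[LHS]/(pi (u - v)) pi_mapB eq_uv subrr.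
by rewrite -[u - v]homog_coefs_poly_eval homog_coefs_deg_lt //; apply/deg_lt_comp_affineP.
Qed.

Lemma homog_coefs_comp_affine f : deg_lt r.+1 f ->
  homog_coefs r (fun x => f (A *m x + b)) = pi (homog_coefs r f).
Proof.
move=> df; have := homog_coefs_deg_lt (deg_lt_comp_affine A b (deg_lt_sub_homog df)).
by rewrite homog_coefsB => /eqP; rewrite subr_eq0 => /eqP.
Qed.

Definition comp_affine (z : {ffun V -> 'F_2}) : {ffun V -> 'F_2} :=
  [ffun x => z (A *m x + b)].

Lemma Wgt_eqP (z z' : {ffun V -> 'F_2}) :
  Wgt r z = Wgt r z' <-> deg_lt r.+1 (fun x => z x - z' x).
Proof.
split=> [/ffunP eq_zz' S rS|dzz'].
  by have := eq_zz' (exist _ S rS); rewrite !ffunE anfB => ->; rewrite subrr.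
apply/ffunP => S; rewrite !ffunE; apply/eqP; rewrite -subr_eq0 -anfB.
by apply/eqP/dzz'/(valP S).
Qed.

Lemma Wgt_comp_affine z z' :
  (Wgt r (comp_affine z) == Wgt r (comp_affine z')) = (Wgt r z == Wgt r z').
Proof.
apply/eqP/eqP => /Wgt_eqP dzz'; apply/Wgt_eqP.
  by apply/deg_lt_comp_affineP; apply: eq_deg_lt dzz' => x; rewrite !ffunE.
by apply: eq_deg_lt (deg_lt_comp_affine A b dzz') => x; rewrite !ffunE.
Qed.

Lemma Wr_comp_affineB z z' : Wgt r z = Wgt r z' ->
  Wr r (comp_affine z) - Wr r (comp_affine z') = pi (Wr r z - Wr r z').
Proof.
move=> /Wgt_eqP dzz'.
rewrite -[Wr r z - _]homog_coefsB -homog_coefs_comp_affine // -homog_coefsB.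
by apply/ffunP => J; rewrite !ffunE; apply: eq_anf => x; rewrite !ffunE.
Qed.

Lemma joint_eq_comp_affine (u u' : rvec m r) z z' :
  ((pi u + Wr r (comp_affine z), Wgt r (comp_affine z)) ==
   (pi u' + Wr r (comp_affine z'), Wgt r (comp_affine z'))) =
  ((u + Wr r z, Wgt r z) == (u' + Wr r z', Wgt r z')).
Proof.
have addr_eq (x y x' y' : rvec m r) : (x + y == x' + y') = (x - x' == y' - y).
  by rewrite -subr_eq0 -[RHS]subr_eq0 opprD opprB addrACA.
rewrite !xpair_eqE Wgt_comp_affine.
case: (Wgt r z =P Wgt r z') => [eqW|]; rewrite ?andbF // !andbT.
by rewrite [LHS]addr_eq [RHS]addr_eq Wr_comp_affineB // -pi_mapB (inj_eq pi_map_inj).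
Qed.

End AffineChange.

Lemma ffun_comp_inj (T U : finType) (h : T -> T) :
  injective h -> injective (fun z : {ffun T -> U} => [ffun x => z (h x)]).
Proof.
move=> h_inj z z' /ffunP eq_zz'; have [h' hK h'K] := injF_bij h_inj.
by apply/ffunP => y; have := eq_zz' (h' y); rewrite !ffunE h'K.
Qed.

Section FiniteLaws.
Variable R : realType.

Lemma entropyE (T V : finType) (p : T -> R) (f : T -> V) :
  entropy p f = - \sum_t p t * log2 (\sum_(t' | f t' == f t) p t').
Proof.
rewrite /entropy (partition_big f xpredT) //=; congr (- _); apply: eq_bigr => v _.
by rewrite mulr_suml; apply: eq_bigr => t /eqP <-.
Qed.

Lemma entropy_transport (T U V : finType) (h : T -> T) (p q : T -> R)
    (f : T -> U) (g : T -> V) :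
  injective h -> (forall t, p (h t) = q t) ->
  (forall t t', (f (h t') == f (h t)) = (g t' == g t)) ->
  entropy p f = entropy q g.
Proof.
move=> h_inj pq fg; rewrite !entropyE (reindex_inj h_inj); congr (- _).
apply: eq_bigr => t _; rewrite pq (reindex_inj h_inj).
by congr (_ * log2 _); apply: eq_big => t' //; rewrite pq.
Qed.

Lemma unif_imset (T T' : finType) (h : T -> T') (H : {set T}) u :
  injective h -> unif R (h @: H) (h u) = unif R H u.
Proof. by move=> h_inj; rewrite /unif mem_imset ?card_imset. Qed.

Lemma pZ_comp m (delta : R) (h : 'cV['F_2]_m -> 'cV['F_2]_m)
    (z : {ffun 'cV['F_2]_m -> 'F_2}) :
  injective h -> pZ delta [ffun x => z (h x)] = pZ delta z.
Proof.
by move=> h_inj; rewrite /pZ [RHS](reindex_inj h_inj); apply: eq_bigr => x _; rewrite ffunE.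
Qed.

End FiniteLaws.

Theorem lemma6p4 (R : realType) (m r : nat) (delta : R)
    (A : 'M['F_2]_m) (b : 'cV['F_2]_m) (G : {set {ffun rset m r -> 'F_2}}) :
  (1 <= m)%N -> (r <= m)%N -> 0 < delta < 2^-1 ->
  A \in unitmx -> is_subspace G ->
  dist_d delta G = dist_d delta [set pi_map A b u | u in G].
Proof.
move=> _ _ _ unitA _.
have pi_inj := @pi_map_inj m r A b unitA.
pose sigma (w : rvec m r * {ffun 'cV['F_2]_m -> 'F_2}) :=
  (pi_map A b w.1, comp_affine A b w.2).
have sigma_inj : injective sigma.
  by move=> [u z] [u' z'] [/pi_inj -> /(ffun_comp_inj (affine_inj (b := b) unitA)) ->].
have weight_sigma w : unif R (pi_map A b @: G) (sigma w).1 * pZ delta (sigma w).2 =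
                      unif R G w.1 * pZ delta w.2.
  by rewrite unif_imset // pZ_comp //; exact: affine_inj.
rewrite /dist_d /=; congr (_ - _ - _ * (_ + _)); apply/esym.
- apply: (entropy_transport sigma_inj weight_sigma) => -[u z] [u' z'] /=.
  exact: joint_eq_comp_affine.
- apply: (entropy_transport sigma_inj weight_sigma) => -[u z] [u' z'] /=.
  exact: Wgt_comp_affine.
- apply: (entropy_transport pi_inj) => [u|u u'] /=; first exact: unif_imset.
  exact: inj_eq.
Qed.
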